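(* Let $X$ be a well-filtered coherent space. If $X$ is first-countable, then $X$ is sober.
   Context: Spaces are $T_0$; the specialization order is $x\le y$ iff $x\in\overline{\{y\}}$, and a subset is saturated if it is an upper set in this order. $X$ is well-filtered if for every filtered family $\mathcal F$ of compact saturated subsets and every open $U$, $\bigcap\mathcal F\subseteq U$ implies $F\subseteq U$ for some $F\in\mathcal F$. $X$ is coherent if the intersection of any two compact saturated subsets is compact. A $T_0$ space is sober if every irreducible closed set equals $\overline{\{x\}}$ for some point $x$. *)

From mathcomp Require Import all_boot all_order.
From mathcomp Require Import all_classical all_reals all_analysis.
Set Implicit Arguments. Unset Strict Implicit. Unset Printing Implicit Defensive.
Local Open Scope classical_set_scope.

Section Defs.
Context {T : topologicalType}.

Definition spec_le (x y : T) : Prop := closure [set y] x.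

Definition saturated (A : set T) : Prop :=
  forall x y, A x -> spec_le x y -> A y.

Definition compact_saturated (A : set T) : Prop := compact A /\ saturated A.

Definition filtered_family (F : set (set T)) : Prop :=
  (exists K, F K) /\
  (forall K1 K2, F K1 -> F K2 -> exists K3, F K3 /\ K3 `<=` K1 `&` K2).

Definition well_filtered : Prop :=
  forall (F : set (set T)) (U : set T),
    filtered_family F -> (forall K, F K -> compact_saturated K) ->
    open U -> \bigcap_(K in F) K `<=` U -> exists2 K, F K & K `<=` U.

Definition coherent : Prop :=
  forall A B : set T, compact_saturated A -> compact_saturated B ->
    compact (A `&` B).

Definition first_countable : Prop :=
  forall x : T, exists B : set (set T),
    countable B /\ (forall V, B V -> nbhs x V) /\
    (forall W, nbhs x W -> exists2 V, B V & V `<=` W).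

Definition irreducible_closed (A : set T) : Prop :=
  closed A /\ A !=set0 /\
  forall B C : set T, closed B -> closed C -> A `<=` B `|` C ->
    A `<=` B \/ A `<=` C.

Definition sober : Prop :=
  forall A : set T, irreducible_closed A -> exists x : T, A = closure [set x].

End Defs.
Arguments well_filtered : clear implicits.
Arguments coherent : clear implicits.
Arguments first_countable : clear implicits.
Arguments sober : clear implicits.

(* In a well-filtered space, a filtered family of compact saturated sets that
   all meet a closed set A has a common point in A.  Applied to the principal
   upper sets of the points of A, this shows that a closed set which is directed
   for the specialization order has a greatest element, i.e. a generic point.
   So it suffices to show that an irreducible closed set A is directed.  Given
   a, b in A, irreducibility and first countability yield a sequence u in A
   converging to both a and b.  A convergent sequence together with its limit
   is compact, hence so is its saturation; by coherence the sets
   sat({a} ∪ {u_n | n ≥ k}) ∩ sat({b} ∪ {u_n | n ≥ k}) form a decreasing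
   chain of compact saturated sets, each meeting A at u_k.  A common point of
   the chain lying in A is above both a and b. *)

From mathcomp Require Import all_boot all_order.
From mathcomp Require Import all_classical all_reals all_analysis.

Set Implicit Arguments. Unset Strict Implicit. Unset Printing Implicit Defensive.
Local Open Scope classical_set_scope.

Section FirstCountableSobriety.
Context {T : topologicalType}.
Implicit Types (x y z a b : T) (A B S K : set T) (u : nat -> T).

Lemma spec_le_refl x : spec_le x x.
Proof. exact: subset_closure. Qed.

Lemma spec_le_nbhs B x y : nbhs x B -> spec_le x y -> B y.
Proof. by move=> xB /(_ B xB) [_ [-> ]]. Qed.

Lemma spec_le_trans x y z : spec_le x y -> spec_le y z -> spec_le x z.
Proof.
move=> xy yz B /nbhs_interior xB; exists z; split=> //.
exact: spec_le_nbhs (spec_le_nbhs xB xy) yz.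
Qed.

Lemma closed_spec_le A x y : closed A -> A y -> spec_le x y -> A x.
Proof.
move=> cA Ay xy; rewrite (closure_id A).1 //.
by apply: (closureS (A := [set y])) xy => _ ->.
Qed.

Definition saturation S : set T := [set y | exists2 s, S s & spec_le s y].

Lemma subset_saturation S : S `<=` saturation S.
Proof. by move=> s Ss; exists s => //; exact: spec_le_refl. Qed.

Lemma saturationS S S' : S `<=` S' -> saturation S `<=` saturation S'.
Proof. by move=> SS' y [s /SS' S's sy]; exists s. Qed.

Lemma saturation_saturated S : saturated (saturation S).
Proof. by move=> x y [s Ss sx] xy; exists s => //; exact: spec_le_trans xy. Qed.

(* A cluster point in K of the filter generated by the traces K `&` down E,
   E in F, clusters F itself, because neighbourhoods are upper sets. *)
Lemma compact_saturation K : compact K -> compact (saturation K).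
Proof.
move=> cK F PF FK.
pose down (E : set T) : set T := [set z | exists2 e, E e & spec_le z e].
pose G := filter_from F (fun E => K `&` down E).
have FG : Filter G.
  apply: filter_from_filter; first by exists setT; exact: filterT.
  move=> E1 E2 FE1 FE2; exists (E1 `&` E2); first exact: filterI.
  by move=> z [Kz [e [E1e E2e] ze]]; split; split=> //; exists e.
have PG : ProperFilter G.
  apply: filter_from_proper => // E FE.
  have [e [[k Kk ke] Ee]] := filter_ex (filterI FK FE).
  by exists k; split=> //; exists e.
have GK : G K by exists setT; [exact: filterT | move=> z []].
have [k [Kk clk]] := cK G PG GK.
exists k; split; first exact: subset_saturation.
move=> E B FE /nbhs_interior kB.
have GE : G (K `&` down E) by exists E.
have [z [[_ [e Ee ze]] zB]] := clk _ _ GE kB.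
by exists e; split=> //; exact: spec_le_nbhs zB ze.
Qed.

Definition tail_with_limit a u k : set T :=
  [set a] `|` u @` [set n | (k <= n)%N].

Lemma tail_with_limit_nonincreasing a u k m : (k <= m)%N ->
  tail_with_limit a u m `<=` tail_with_limit a u k.
Proof.
by move=> km z [->|[n mn <-]]; [left | right; exists n => //; exact: leq_trans mn].
Qed.

(* If a does not cluster F, some neighbourhood of a, which contains almost all
   terms of u, misses a member of F; so F contains a finite part of the tail. *)
Lemma compact_tail_with_limit a u k : u @ \oo --> a ->
  compact (tail_with_limit a u k).
Proof.
move=> ua F PF FS; have [aF|] := pselect (cluster F a).
  by exists a; split=> //; left.
move=> /existsNP [E /existsNP [B /not_implyP [FE /not_implyP [aB]]]] EB0.
have [N _ tailB] := ua B aB.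
pose C := u @` [set n | (k <= n < N)%N].
have FC : F C.
  apply: filterS (filterI FS FE) => _ [[->|[n /= kn <-]] Ez].
    by exfalso; apply: EB0; exists a; split=> //; exact: nbhs_singleton.
  have [Nn|nN] := leqP N n; last by exists n => //=; rewrite kn.
  by exfalso; apply: EB0; exists (u n); split=> //; exact: tailB.
have cC : compact C.
  apply/finite_compact/finite_image/(sub_finite_set _ (finite_II N)).
  by move=> n /andP[].
have [p [[n /andP[kn _] <-] clp]] := cC F PF FC.
by exists (u n); split=> //; right; exists n.
Qed.

Lemma spec_le_limit a u y : u @ \oo --> a ->
  (forall k, saturation (tail_with_limit a u k) y) -> spec_le a y.
Proof.
move=> ua uy B aB; exists y; split=> //.
have [N _ tailB] := ua _ (nbhs_interior aB).
have [_ [->|[n Nn <-]] sy] := uy N; first exact: spec_le_nbhs aB sy.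
exact: spec_le_nbhs (tailB n Nn) sy.
Qed.

Lemma first_countable_sequential_base x : first_countable T ->
  exists g : nat -> set T, (forall n, nbhs x (g n)) /\
    forall u, (forall n, g n (u n)) -> u @ \oo --> x.
Proof.
move=> /(_ x) [Bx [cBx [Bx_nbhs Bx_base]]].
case/pfcard_geP: cBx => [B0|[h]].
  by have [V] := Bx_base setT filterT; rewrite B0.
pose g n : set T := [set z | forall i, (i <= n)%N -> h i z].
exists g; split=> [n|u gu W /Bx_base [V BxV VW]].
  have hn : \forall z \near x, forall i : 'I_n.+1, h i z.
    by apply: filter_forall => i; apply: Bx_nbhs; exact: funS.
  by apply: filterS hn => z hz i ilen; exact: (hz (@Ordinal n.+1 i ilen)).
have [i _ hiV] := 'surj_h BxV.
by exists i => // n /= ilen; apply: VW; rewrite -hiV; exact: gu n i ilen.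
Qed.

Lemma filtered_family_nonincreasing (L : nat -> set T) :
  (forall n m, (n <= m)%N -> L m `<=` L n) -> filtered_family (range L).
Proof.
move=> Lnon; split; first by exists (L 0%N), 0%N.
move=> _ _ [k _ <-] [m _ <-]; exists (L (maxn k m)); split; first by exists (maxn k m).
by move=> z Lz; split; apply: Lnon Lz; rewrite ?leq_maxl ?leq_maxr.
Qed.

Lemma well_filtered_meets_closed (F : set (set T)) A : well_filtered T ->
  filtered_family F -> (forall K, F K -> compact_saturated K) -> closed A ->
  (forall K, F K -> K `&` A !=set0) -> (\bigcap_(K in F) K) `&` A !=set0.
Proof.
move=> wf Ff Fcs cA FA; apply: contrapT => IA0.
have oA : open (~` A) by rewrite openC.
have IA : \bigcap_(K in F) K `<=` ~` A by move=> z Fz Az; apply: IA0; exists z.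
have [K FK KA] := wf F (~` A) Ff Fcs oA IA.
by have [z [Kz Az]] := FA K FK; exact: KA z Kz Az.
Qed.

Definition spec_directed A :=
  forall a b, A a -> A b -> exists2 y, A y & spec_le a y /\ spec_le b y.

Lemma well_filtered_directed_greatest A : well_filtered T -> closed A ->
  A !=set0 -> spec_directed A -> exists2 g, A g & forall d, A d -> spec_le d g.
Proof.
move=> wf cA [a0 Aa0] dirA.
pose F := (fun d => saturation [set d]) @` A.
have Ff : filtered_family F.
  split; first by exists (saturation [set a0]), a0.
  move=> _ _ [d1 Ad1 <-] [d2 Ad2 <-]; have [y Ay [d1y d2y]] := dirA _ _ Ad1 Ad2.
  exists (saturation [set y]); split; first by exists y.
  by move=> z [_ -> yz]; split; [exists d1 | exists d2] => //; exact: spec_le_trans yz.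
have Fcs K : F K -> compact_saturated K.
  move=> [d _ <-]; split; last exact: saturation_saturated.
  exact/compact_saturation/compact_set1.
have FA K : F K -> K `&` A !=set0.
  by move=> [d Ad <-]; exists d; split=> //; exact: subset_saturation.
have [g [Fg Ag]] := well_filtered_meets_closed wf Ff Fcs cA FA.
by exists g => // d Ad; have [_ -> //] := Fg _ (imageP _ Ad).
Qed.

Lemma closure1_greatest A g : closed A -> A g ->
  (forall d, A d -> spec_le d g) -> A = closure [set g].
Proof.
move=> cA Ag gA; apply/seteqP; split=> [d /gA //|d dg].
exact: closed_spec_le cA Ag dg.
Qed.

Lemma irreducible_closed_meetsI A U V : irreducible_closed A ->
  open U -> open V -> A `&` U !=set0 -> A `&` V !=set0 -> A `&` (U `&` V) !=set0.
Proof.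
move=> [_ [_ irrA]] oU oV [a [Aa Ua]] [b [Ab Vb]]; apply: contrapT => noUV.
have cCU : closed (~` U) by rewrite closedC.
have cCV : closed (~` V) by rewrite closedC.
have [AU|AV] : A `<=` ~` U \/ A `<=` ~` V.
  apply: irrA => // z Az; have [Uz|] := pselect (U z); last by left.
  by right=> Vz; apply: noUV; exists z.
- exact: AU a Aa Ua.
- exact: AV b Ab Vb.
Qed.

Lemma irreducible_common_limit A a b : first_countable T ->
  irreducible_closed A -> A a -> A b ->
  exists2 u, (forall n, A (u n)) & u @ \oo --> a /\ u @ \oo --> b.
Proof.
move=> fc irrA Aa Ab.
have [ga [ga_nbhs ga_cvg]] := first_countable_sequential_base a fc.
have [gb [gb_nbhs gb_cvg]] := first_countable_sequential_base b fc.
have meet n : A `&` ((ga n)° `&` (gb n)°) !=set0.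
  apply: irreducible_closed_meetsI => //; try exact: open_interior.
  - by exists a; split=> //; exact: nbhs_singleton (nbhs_interior (ga_nbhs n)).
  - by exists b; split=> //; exact: nbhs_singleton (nbhs_interior (gb_nbhs n)).
have [u uP] := choice meet.
exists u => [n|]; first exact: (uP n).1.
split; [apply: ga_cvg => n; have [_ [+ _]] := uP n
       | apply: gb_cvg => n; have [_ [_ +]] := uP n].
all: exact: interior_subset.
Qed.

Lemma irreducible_spec_directed A : well_filtered T -> coherent T ->
  first_countable T -> irreducible_closed A -> spec_directed A.
Proof.
move=> wf coh fc irrA a b Aa Ab.
have [u Au [ua ub]] := irreducible_common_limit fc irrA Aa Ab.
pose L k := saturation (tail_with_limit a u k) `&` saturation (tail_with_limit b u k).
have Lf : filtered_family (range L).
  apply: filtered_family_nonincreasing => k m km z [za zb].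
  have sub c : saturation (tail_with_limit c u m) `<=` saturation (tail_with_limit c u k).
    exact/saturationS/tail_with_limit_nonincreasing.
  by split; [exact: sub za | exact: sub zb].
have Lcs K : range L K -> compact_saturated K.
  move=> [k _ <-]; split.
    by apply: coh; split; try exact: saturation_saturated;
      apply/compact_saturation/compact_tail_with_limit.
  by move=> z w [za zb] zw; split; exact: saturation_saturated zw.
have LA K : range L K -> K `&` A !=set0.
  move=> [k _ <-]; exists (u k); split=> //.
  by split; apply: subset_saturation; right; exists k => /=.
have [y [Ly Ay]] := well_filtered_meets_closed wf Lf Lcs irrA.1 LA.
have Lky k : L k y by apply: Ly; exists k.
exists y => //; split; [apply: spec_le_limit ua _ | apply: spec_le_limit ub _].
- by move=> k; have [] := Lky k.
- by move=> k; have [] := Lky k.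
Qed.

End FirstCountableSobriety.

Theorem corollary3p13 (T : topologicalType) :
  kolmogorov_space T -> well_filtered T -> coherent T ->
  first_countable T -> sober T.
Proof.
move=> _ wf coh fc A irrA; have [cA [A0 _]] := irrA.
have [g Ag gA] := well_filtered_directed_greatest wf cA A0
  (irreducible_spec_directed wf coh fc irrA).
by exists g; exact: closure1_greatest.
Qed.
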